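(* Let $N\geq 2$ and let $p(\theta)=a_0+\sum_{k=1}^{N}(a_k\cos k\theta+b_k\sin k\theta)$ be a real trigonometric polynomial of degree $N$ (so $a_N\neq 0$ or $b_N\neq 0$). Let $\gamma(\theta)=\big(p(\theta)\cos\theta-p'(\theta)\sin\theta,\ p(\theta)\sin\theta+p'(\theta)\cos\theta\big)$ for $\theta\in\,]-\pi,\pi[$, let $\mathcal{C}$ be the curve it describes, and let $\mathcal{P}(t)=\gamma(2\arctan t)$, $t\in\mathbb{R}$. Let $q$ be the number of times $\gamma$ traces $\mathcal{C}$, i.e. the positive integer such that for all but finitely many $t\in\mathbb{R}$ the set $\{s\in\mathbb{R}:\mathcal{P}(s)=\mathcal{P}(t)\}$ has exactly $q$ elements. (i) If some coefficient of even index is nonzero, i.e. $a_{2k}\neq 0$ for some integer $k$ with $0\le 2k\le N$, or $b_{2k}\neq 0$ for some integer $k$ with $2\le 2k\le N$, then $q=1$. (ii) If $a_{2k}=0$ and $b_{2k}=0$ for all integers $k$ with $0\leq 2k\leq N$ (with $b_0:=0$), then $q=2$.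
   Context: The map $\theta\mapsto\tan(\theta/2)$ is a bijection $]-\pi,\pi[\to\mathbb{R}$, so $\mathcal{P}$ is a rational parametrization of $\mathcal{C}$. *)

From Stdlib Require Import Reals Lra List.
From Coquelicot Require Import Coquelicot.
Open Scope R_scope.

Definition trig_poly (N : nat) (a b : nat -> R) (th : R) : R :=
  a 0%nat + sum_f 1 N (fun k => a k * cos (INR k * th) + b k * sin (INR k * th)).

Definition gamma_curve (N : nat) (a b : nat -> R) (th : R) : R * R :=
  let p := trig_poly N a b in
  (p th * cos th - Derive p th * sin th,
   p th * sin th + Derive p th * cos th).

Definition Pcurve (N : nat) (a b : nat -> R) (t : R) : R * R :=
  gamma_curve N a b (2 * atan t).

Definition has_card (S : R -> Prop) (n : nat) : Prop :=
  exists l : list R, NoDup l /\ length l = n /\ (forall s, S s <-> In s l).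

Definition traces_times (N : nat) (a b : nat -> R) (q : nat) : Prop :=
  (0 < q)%nat /\
  exists E : list R, forall t, ~ In t E ->
    has_card (fun s => Pcurve N a b s = Pcurve N a b t) q.

(* Write z = e^(i th). Since p + i p' = sum_m (1 - m) c_m z^m, the point gamma(th), read as
   a complex number, satisfies z^(N-1) gamma = U(z) and z^(N+1) conj(gamma) = V(z) for two
   polynomials U, V of degree 2N. A coincidence P(s) = P(t) therefore puts z = e^(i th(t))
   and w = e^(i th(s)) on the common zeros of F_U = z^(N-1) U(w) - w^(N-1) U(z) and
   F_V = z^(N+1) V(w) - w^(N+1) V(z). Both vanish on the diagonal w = z; they vanish on the
   antidiagonal w = -z (i.e. s = -1/t) exactly when the even-index coefficients of p vanish.
   Once these factors are removed, the cofactors have no common factor: a prime common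
   factor would divide the Jacobian of (F_U, F_V), which Euler-type identities reduce, modulo
   F_U and F_V, to z^(N-1) T(z) w^(N-1) T(w) (z - w) (z + w), and every factor of this product
   is excluded. So the resultant of the cofactors in w is a nonzero polynomial in z, and only
   its finitely many roots can carry additional points of a fibre. *)

From Stdlib Require Import Reals List Lra Classical.
From Coquelicot Require Import Coquelicot.
From mathcomp Require Import ssreflect ssrbool ssrfun eqtype ssrnat.

Set Implicit Arguments.
Unset Strict Implicit.
Unset Printing Implicit Defensive.

Section TrigPolyDerivative.
Local Open Scope R_scope.

Lemma is_derive_sum_f_R0 (m : nat) (f : nat -> R -> R) (df : nat -> R) (x : R) :
  (forall k, is_derive (f k) x (df k)) ->
  is_derive (fun y => sum_f_R0 (fun k => f k y) m) x (sum_f_R0 df m).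
Proof.
move=> h; elim: m => [|m IH] /=; first exact: h.
exact: is_derive_plus.
Qed.

Definition trig_poly_deriv (N : nat) (a b : nat -> R) (th : R) : R :=
  sum_f 1 N (fun k => INR k * (b k * cos (INR k * th) - a k * sin (INR k * th))).

Lemma is_derive_trig_poly N a b th :
  is_derive (trig_poly N a b) th (trig_poly_deriv N a b th).
Proof.
rewrite /trig_poly_deriv /sum_f -[X in is_derive _ _ X]Rplus_0_l.
apply: is_derive_plus; first exact: is_derive_const.
apply: (@is_derive_sum_f_R0 _ (fun k y =>
  a (k + 1)%coq_nat * cos (INR (k + 1)%coq_nat * y)
  + b (k + 1)%coq_nat * sin (INR (k + 1)%coq_nat * y))) => k.
by auto_derive; [|ring].
Qed.

Lemma Derive_trig_poly N a b th :
  Derive (trig_poly N a b) th = trig_poly_deriv N a b th.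
Proof. exact: is_derive_unique (is_derive_trig_poly N a b th). Qed.

End TrigPolyDerivative.

Section HalfAngle.
Local Open Scope R_scope.

Lemma one_plus_sqr_pos t : 0 < 1 + t * t.
Proof. nra. Qed.

Lemma cos_atan_sqr t : cos (atan t) * cos (atan t) = / (1 + t * t).
Proof.
rewrite cos_atan /Rsqr.
have hs : sqrt (1 + t * t) * sqrt (1 + t * t) = 1 + t * t.
  by rewrite sqrt_sqrt //; have := one_plus_sqr_pos t; lra.
have hs0 : sqrt (1 + t * t) <> 0 by move=> e; rewrite e in hs; have := one_plus_sqr_pos t; lra.
have -> : 1 / sqrt (1 + t * t) * (1 / sqrt (1 + t * t)) =
  / (sqrt (1 + t * t) * sqrt (1 + t * t)) by field.
by rewrite hs.
Qed.

Lemma sin_atan_cos t : sin (atan t) = t * cos (atan t).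
Proof. by rewrite sin_atan cos_atan /Rdiv Rmult_1_l. Qed.

Lemma cos_2atan t : cos (2 * atan t) = (1 - t * t) / (1 + t * t).
Proof.
rewrite cos_2a_cos Rmult_assoc cos_atan_sqr.
by field; have := one_plus_sqr_pos t; lra.
Qed.

Lemma sin_2atan t : sin (2 * atan t) = 2 * t / (1 + t * t).
Proof.
rewrite sin_2a sin_atan_cos.
have -> : 2 * (t * cos (atan t)) * cos (atan t) = 2 * t * (cos (atan t) * cos (atan t)).
  by ring.
by rewrite cos_atan_sqr.
Qed.

Lemma one_plus_cos_2atan t : 1 + cos (2 * atan t) = 2 / (1 + t * t).
Proof. by rewrite cos_2atan; field; have := one_plus_sqr_pos t; lra. Qed.

Lemma cos_2atan_neq_m1 t : cos (2 * atan t) <> -1.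
Proof.
move=> e; have := one_plus_cos_2atan t; rewrite e.
have := Rdiv_lt_0_compat 2 _ Rlt_0_2 (one_plus_sqr_pos t); lra.
Qed.

Lemma tan_half_2atan t : sin (2 * atan t) / (1 + cos (2 * atan t)) = t.
Proof.
rewrite sin_2atan one_plus_cos_2atan.
by field; have := one_plus_sqr_pos t; lra.
Qed.

Lemma antipode_inv t u : u * t = -1 -> t <> 0 /\ u = - / t.
Proof.
move=> ut; have t0 : t <> 0 by move=> t0; rewrite t0 Rmult_0_r in ut; lra.
by split=> //; apply: (Rmult_eq_reg_r t) => //; rewrite ut; field.
Qed.

Lemma cos_2atan_antipode t u : u * t = -1 -> cos (2 * atan u) = - cos (2 * atan t).
Proof.
case/antipode_inv => t0 ->; rewrite !cos_2atan.
have := one_plus_sqr_pos t; have := one_plus_sqr_pos (- / t) => h1 h2.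
by field; split => //; lra.
Qed.

Lemma sin_2atan_antipode t u : u * t = -1 -> sin (2 * atan u) = - sin (2 * atan t).
Proof.
case/antipode_inv => t0 ->; rewrite !sin_2atan.
have := one_plus_sqr_pos t; have := one_plus_sqr_pos (- / t) => h1 h2.
by field; split => //; lra.
Qed.

Lemma antipode_neq t u : u * t = -1 -> u <> t.
Proof. by move=> ut e; rewrite e in ut; nra. Qed.

End HalfAngle.

From HB Require Import structures.
From mathcomp Require Import all_boot all_order all_algebra.
From mathcomp Require Import ring zify.
From mathcomp Require Import Rstruct complex.
Import Order.TTheory GRing.Theory Num.Theory.
Local Open Scope ring_scope.

Section PolynomialFacts.
Variable R : comNzRingType.

Lemma coef_comp_polyNX (p : {poly R}) i : (p \Po - 'X)`_i = (-1) ^+ i * p`_i.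
Proof.
rewrite comp_polyE; under eq_bigr do rewrite -scaleN1r exprZn scalerA.
rewrite coef_sumMXn /= (big_ord1_eq _ (fun j => p`_j * (-1) ^+ j)) mulrC.
by case: ltnP => // hi; rewrite nth_default ?mulr0.
Qed.

Lemma exprNX k : (- 'X : {poly R}) ^+ k = (-1) ^+ k *: 'X^k.
Proof. by rewrite -scaleN1r exprZn. Qed.

Lemma root_deriv_mul (P Q : {poly R}) c : root P c -> root Q c -> root (deriv (P * Q)) c.
Proof. by move=> /eqP Pc /eqP Qc; rewrite /root derivM !hornerE Pc Qc !mulr0 mul0r addr0. Qed.

End PolynomialFacts.

Section InnerDerivative.
Variable R : comNzRingType.
Implicit Types (p : {poly R}) (P Q : {poly {poly R}}).

Definition deriv_inner P : {poly {poly R}} := map_poly (@deriv R) P.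

Lemma deriv_innerB P Q : deriv_inner (P - Q) = deriv_inner P - deriv_inner Q.
Proof. exact: raddfB. Qed.

Lemma deriv_innerC p : deriv_inner p%:P = (deriv p)%:P.
Proof. exact: map_polyC. Qed.

Lemma deriv_innerM P Q : deriv_inner (P * Q) = deriv_inner P * Q + P * deriv_inner Q.
Proof.
apply/polyP=> i; rewrite /deriv_inner coefD !coef_map_id0 ?deriv0 // !coefM.
rewrite raddf_sum -big_split /=; apply: eq_bigr => j _.
by rewrite derivM !coef_map_id0 ?deriv0 // addrC.
Qed.

Lemma deriv_innerXn n : deriv_inner 'X^n = 0.
Proof.
apply/polyP=> i; rewrite /deriv_inner coef_map_id0 ?deriv0 // coefXn coef0.
by case: (i == n); rewrite ?deriv0 // -polyC1 derivC.
Qed.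

Lemma deriv_inner_lift p : deriv_inner p^:P = 0.
Proof.
by apply/polyP=> i; rewrite /deriv_inner coef_map_id0 ?deriv0 // coef_map /= derivC coef0.
Qed.

Definition jacobian P Q : {poly {poly R}} :=
  deriv_inner P * deriv Q - deriv_inner Q * deriv P.

End InnerDerivative.

Section EulerIdentities.
Variable R : comNzRingType.

(* [coinc_poly k U] is z^k U(w) - w^k U(z), with w = 'X the outer and z = 'Y the inner
   variable. *)
Definition coinc_poly (k : nat) (U : {poly R}) : {poly {poly R}} :=
  ('X^k : {poly R})%:P * U^:P - 'X^k * U%:P.

Definition euler_op (k : nat) (U : {poly R}) : {poly R} := 'X * U^`() - k%:R * U.

Lemma mulX_derivXn (S : comNzRingType) k : 'X * ('X^k)^`() = k%:R * 'X^k :> {poly S}.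
Proof.
rewrite derivXn; case: k => [|k]; first by rewrite !mulr0n mulr0 mul0r.
by rewrite mulrnAr -exprS mulr_natl.
Qed.

Lemma coinc_poly_deriv_inner k U :
  'Y * deriv_inner (coinc_poly k U) = k%:R * coinc_poly k U - 'X^k * (euler_op k U)%:P.
Proof.
rewrite /coinc_poly /euler_op deriv_innerB !deriv_innerM !deriv_innerC deriv_inner_lift.
rewrite deriv_innerXn mulr0 addr0 mul0r add0r mulrBr mulrA -rmorphM /= mulX_derivXn.
by rewrite !rmorphB /= !rmorphM /= !rmorph_nat; ring.
Qed.

Lemma coinc_poly_deriv k U :
  'X * deriv (coinc_poly k U) = ('X^k : {poly R})%:P * (euler_op k U)^:P + k%:R * coinc_poly k U.
Proof.
rewrite /coinc_poly /euler_op derivB !derivM !derivC deriv_map /= mul0r add0r mulr0 addr0.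
rewrite rmorphB /= !rmorphM /= rmorph_nat map_polyX mulrBr (mulrA 'X ('X^k)^`()) mulX_derivXn.
ring.
Qed.

Lemma coinc_poly_diag k U : (coinc_poly k U).['X] = 0.
Proof. by rewrite /coinc_poly !hornerE [U^:P.[_]]comp_polyXr subrr. Qed.

Lemma coinc_poly_deriv_horner k U c :
  c * (deriv (coinc_poly k U)).[c] = 'X^k * (euler_op k U \Po c) + k%:R * (coinc_poly k U).[c].
Proof.
have := congr1 (horner^~ c) (coinc_poly_deriv k U).
by rewrite -!polyC_natr !hornerE.
Qed.

Lemma coef_euler_op k (p : {poly R}) j : (euler_op k p)`_j = (j%:R - k%:R) * p`_j.
Proof.
rewrite /euler_op coefB coefXM -polyC_natr coefCM mulrBl.
case: j => [|j] /=; first by rewrite mul0r.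
by rewrite coef_deriv -[p`_j.+1 *+ _]mulr_natl.
Qed.

Lemma coinc_poly_horner_eval k U (z w : R) :
  (map_poly (horner_eval z) (coinc_poly k U)).[w] = z ^+ k * U.[w] - w ^+ k * U.[z].
Proof.
rewrite /coinc_poly rmorphB !rmorphM /= map_polyC map_polyXn /= horner_evalE hornerXn.
rewrite -map_poly_comp.
have -> : map_poly (horner_eval z \o polyC) U = U.
  by rewrite (eq_map_poly (g := id)) ?map_poly_id // => x /=; rewrite horner_evalE hornerC.
by rewrite map_polyC /= horner_evalE !hornerE.
Qed.

Lemma coinc_poly_antidiag k (U : {poly R}) :
  U \Po - 'X = (-1) ^+ k *: U -> (coinc_poly k U).[- 'X] = 0.
Proof.
move=> UN; rewrite /coinc_poly !hornerE [U^:P.[_]]UN exprNX.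
by rewrite -scalerAl -scalerAr subrr.
Qed.

End EulerIdentities.

Section CoincidenceRoots.
Variable R : idomainType.

Lemma size_coinc_poly_gt k (U : {poly R}) d :
  (k < d)%N -> U`_d != 0 -> (d < size (coinc_poly k U))%N.
Proof.
move=> kd Ud0; rewrite ltnNge; apply/negP => /(nth_default 0); apply/eqP.
rewrite /coinc_poly coefB coefCM coef_map /= coefXnM ifF; last by rewrite ltnNge ltnW.
rewrite coefC ifF; last by apply/negbTE; rewrite subn_eq0 -ltnNge.
by rewrite subr0 mulf_neq0 // ?polyC_eq0 // monic_neq0 // monicXn.
Qed.

Lemma coinc_poly_factor_diag k (U : {poly R}) : exists G, coinc_poly k U = ('X - 'Y) * G.
Proof.
have /factor_theorem [G ->] : root (coinc_poly k U) 'X by apply/eqP/coinc_poly_diag.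
by exists G; rewrite mulrC.
Qed.

Lemma coinc_poly_double_root k (U : {poly R}) c :
  root (coinc_poly k U) c -> root (deriv (coinc_poly k U)) c ->
  'X^k * (euler_op k U \Po c) = 0.
Proof.
move=> /eqP F0 /eqP dF0; have := coinc_poly_deriv_horner k U c.
by rewrite F0 dF0 !mulr0 addr0 => ->.
Qed.

Lemma coinc_cofactor_nonroot k (U : {poly R}) Q G c :
  coinc_poly k U = Q * G -> root Q c -> 'X^k * (euler_op k U \Po c) != 0 -> ~~ root G c.
Proof.
move=> UQG Qc T0; apply/negP => Gc; move/eqP: T0; apply.
by apply: coinc_poly_double_root; rewrite UQG ?rootM ?Qc // root_deriv_mul.
Qed.

End CoincidenceRoots.

Section CommonFactor.
Variable R : idomainType.
Implicit Types (p q A B H : {poly R}).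

Definition poly_prime H : Prop :=
  (1 < size H)%N /\ forall A B, H %| A * B -> (H %| A) || (H %| B).

Lemma prime_common_divisor p q : (1 < size (gcdp p q))%N ->
  exists H, [/\ poly_prime H, H %| p & H %| q].
Proof.
move: {2}(size _) (erefl (size (gcdp p q))) => m.
elim/ltn_ind: m (gcdp p q) (dvdp_gcdl p q) (dvdp_gcdr p q) => m IH H Hp Hq sH s1.
have [[D [ltD s1D Dp Dq]]|noD] :=
  classic (exists D : {poly R}, [/\ (size D < size H)%N, (1 < size D)%N, D %| p & D %| q]).
  by rewrite sH in ltD; exact: IH ltD D Dp Dq erefl s1D.
exists H; split=> //; split=> // A B HAB.
have [cop|ncop] := boolP (coprimep H A).
  by rewrite (Gauss_dvdpr _ cop) in HAB; rewrite HAB orbT.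
have H0 : H != 0 by rewrite -size_poly_gt0 ltnW.
have gH := dvdp_gcdl H A.
have s1g : (1 < size (gcdp H A))%N.
  move: ncop; rewrite /coprimep; have := size_poly_gt0 (gcdp H A).
  by rewrite gcdp_eq0 negb_and H0 => /= /[swap]; case: (size _) => [|[|]].
have [lt|ge] := ltnP (size (gcdp H A)) (size H).
  by case: noD; exists (gcdp H A); split; rewrite // (dvdp_trans gH).
have e : gcdp H A %= H by rewrite -dvdp_size_eqp // eqn_leq dvdp_leq.
by rewrite -(eqp_dvdl _ e) dvdp_gcdr.
Qed.

Lemma root_of_dvdp_XsubC H p c :
  (1 < size H)%N -> H %| 'X - c%:P -> H %| p -> root p c.
Proof.
move=> sH HX Hp; have := dvdp_leq (negbT (polyXsubC_eq0 c)) HX; rewrite size_XsubC => s2.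
have e : H %= 'X - c%:P by rewrite -dvdp_size_eqp // size_XsubC eqn_leq s2.
by rewrite -dvdp_XsubCl -(eqp_dvdl _ e).
Qed.

End CommonFactor.

Section JacobianDivisibility.
Variable R : idomainType.
Implicit Types (H F G : {poly {poly R}}).

Lemma dvdp_jacobian H F : H %| F -> H %| jacobian F H.
Proof.
case/Pdiv.Idomain.dvdpP=> [[c A]] /= c0 hF; rewrite -mul_polyC in hF.
have hD := congr1 (@deriv_inner R) hF; rewrite !deriv_innerM deriv_innerC in hD.
have hd := congr1 (@deriv _) hF; rewrite !derivM derivC mul0r add0r in hd.
rewrite -(@dvdpZr _ (c ^+ 2)) ?expf_neq0 // -mul_polyC rmorphXn /=.
have -> : c%:P ^+ 2 * jacobian F H = H * (c%:P * jacobian A H - (deriv c)%:P * A * deriv H).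
  apply/eqP; rewrite -subr_eq0 /jacobian; apply/eqP.
  transitivity (c%:P * deriv H * ((deriv c)%:P * F + c%:P * deriv_inner F
                  - (deriv_inner A * H + A * deriv_inner H))
    - c%:P * deriv_inner H * (c%:P * deriv F - (deriv A * H + A * deriv H))
    - (deriv c)%:P * deriv H * (c%:P * F - A * H)); first by ring.
  by rewrite hD hd hF !subrr !mulr0 !subr0.
exact: dvdp_mulIl.
Qed.

Lemma dvdp_deriv_mul_jacobian H F G :
  H %| F -> H %| G -> H %| deriv H * jacobian F G.
Proof.
move=> /dvdp_jacobian HF /dvdp_jacobian HG.
have -> : deriv H * jacobian F G = deriv G * jacobian F H - deriv F * jacobian G H.
  by rewrite /jacobian; ring.
by rewrite dvdp_sub // dvdp_mull.
Qed.

Lemma dvdp_coinc_jacobian H k U V : euler_op (k + 2) V = - euler_op k U ->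
  H %| coinc_poly k U -> H %| coinc_poly (k + 2) V ->
  H %| jacobian (coinc_poly k U) (coinc_poly (k + 2) V) ->
  H %| ('X^k * euler_op k U)%:P * ('X^k * euler_op k U)^:P * ('Y - 'X) * ('Y + 'X).
Proof.
move=> TV HF1 HF2 HJ.
set T := euler_op k U; set F1 := coinc_poly k U; set F2 := coinc_poly (k + 2) V.
have D1 := coinc_poly_deriv_inner k U; have d1 := coinc_poly_deriv k U.
have D2 := coinc_poly_deriv_inner (k + 2) V; have d2 := coinc_poly_deriv (k + 2) V.
rewrite TV -/T -/F1 -/F2 in D1 d1 D2 d2.
have e : 'Y * 'X * jacobian F1 F2 =
    ('X^k * T)%:P * ('X^k * T)^:P * ('Y - 'X) * ('Y + 'X)
    - F1 * (k%:R * (('X^(k + 2) : {poly R})%:P * T^:P + 'X^(k + 2) * T%:P))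
    - F2 * ((k + 2)%:R * ('X^k * T%:P + ('X^k : {poly R})%:P * T^:P)).
  have -> : 'Y * 'X * jacobian F1 F2 =
      ('Y * deriv_inner F1) * ('X * deriv F2) - ('Y * deriv_inner F2) * ('X * deriv F1).
    by rewrite /jacobian; ring.
  rewrite D1 d1 D2 d2 !rmorphM /= !rmorphN /= map_polyXn !exprD !rmorphM /=; ring.
have : H %| 'Y * 'X * jacobian F1 F2 by rewrite dvdp_mull.
by rewrite e !dvdp_subl // dvdp_mulr.
Qed.

End JacobianDivisibility.

Section CofactorResultant.
Variable K : numClosedFieldType.
Implicit Types (H G : {poly {poly K}}) (p : {poly K}).

Lemma deriv_neq0 H : (1 < size H)%N -> deriv H != 0.
Proof.
move=> sH; apply/eqP => /(congr1 (fun P : {poly {poly K}} => P`_(size H).-2)).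
rewrite coef_deriv coef0 prednK; last by rewrite -ltnS prednK // ltnW.
move/eqP; rewrite -mulr_natr mulf_eq0 -polyC_natr polyC_eq0 pnatr_eq0.
have hl : H`_(size H).-1 != 0 by rewrite -lead_coefE lead_coef_eq0 -size_poly_gt0 ltnW.
by rewrite (negbTE hl) /=; case: (size H) sH => [|[|m]].
Qed.

Lemma poly_prime_ndvdp_deriv H : poly_prime H -> ~~ (H %| deriv H).
Proof.
case=> sH _; apply/negP => /(dvdp_leq (deriv_neq0 sH)).
by rewrite leqNgt lt_size_deriv // -size_poly_gt0 ltnW.
Qed.

Lemma poly_prime_dvdp_lift H p : poly_prime H -> p != 0 -> H %| p^:P ->
  exists r : K, H %| 'X - (r%:P)%:P.
Proof.
case=> sH Hprime p0; have [rs ->] := closed_field_poly_normal p.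
rewrite map_polyZ /= dvdpZr ?polyC_eq0 ?lead_coef_eq0 // map_prod_XsubC.
elim: rs => [|r rs IH].
  by rewrite big_nil => /(dvdp_leq (oner_neq0 _)); rewrite size_poly1 leqNgt sH.
by rewrite big_cons => /Hprime /orP [|/IH //]; exists r.
Qed.

Variables (n : nat) (U V : {poly K}) (Q G1 G2 : {poly {poly K}}).
Hypothesis euler_UV : euler_op (n + 2) V = - euler_op n U.
Hypothesis euler_U_neq0 : euler_op n U != 0.
Hypothesis coinc_U_const_neq0 : forall r : K, (coinc_poly n U).[r%:P] != 0.
Hypothesis coinc_U_factor : coinc_poly n U = Q * G1.
Hypothesis coinc_V_factor : coinc_poly (n + 2) V = Q * G2.
Hypothesis G1_diag : G1.['X] != 0.
Hypothesis G1_antidiag : G1.[- 'X] != 0.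

(* A prime common factor H of G1 and G2 divides deriv H times the Jacobian of the two
   coincidence polynomials, hence the Jacobian, hence one of z^n T(z), w^n T(w), z - w and
   z + w; the hypotheses exclude each of them. *)
Theorem coinc_cofactor_resultant_neq0 : resultant G1 G2 != 0.
Proof.
rewrite resultant_eq0; apply/negP => /prime_common_divisor [H [Hprime HG1 HG2]].
have [sH Hmul] := Hprime.
have HF1 : H %| coinc_poly n U by rewrite coinc_U_factor dvdp_mull.
have HF2 : H %| coinc_poly (n + 2) V by rewrite coinc_V_factor dvdp_mull.
have /Hmul/orP [HdH|HJ] := dvdp_deriv_mul_jacobian HF1 HF2.
  by case/negP: (poly_prime_ndvdp_deriv Hprime).
have XT0 : 'X^n * euler_op n U != 0 by rewrite mulf_neq0 // monic_neq0 // monicXn.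
have root_G1 c : H %| 'X - c%:P -> root G1 c by move=> HX; apply: root_of_dvdp_XsubC sH HX HG1.
case/Hmul/orP: (dvdp_coinc_jacobian euler_UV HF1 HF2 HJ) => [|Hanti]; last first.
  have /root_G1 : H %| 'X - (- 'X)%:P by rewrite rmorphN /= opprK addrC.
  by rewrite /root (negbTE G1_antidiag).
case/Hmul/orP => [|Hdiag]; last first.
  have /root_G1 : H %| 'X - ('X)%:P by rewrite -opprB dvdpNr.
  by rewrite /root (negbTE G1_diag).
case/Hmul/orP => [/(dvdp_leq _)|].
  by rewrite polyC_eq0 => /(_ XT0)/leq_trans/(_ (size_polyC_leq1 _)); rewrite leqNgt sH.
case/(poly_prime_dvdp_lift Hprime XT0) => r /root_G1 G1r.
by have := coinc_U_const_neq0 r; rewrite coinc_U_factor hornerM (eqP G1r) mulr0 eqxx.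
Qed.

End CofactorResultant.

Section CurvePolynomials.
Variable K : numClosedFieldType.
Variables (n : nat) (c : nat -> K).

(* For [c j] the Fourier coefficient c_(j-n-1) of p (see [fourier_coef]) these are the U and V
   of z^n gamma = U(z) and z^(n+2) conj(gamma) = V(z): [polyU_expi], [polyV_expi] below. *)
Definition polyU : {poly K} := \poly_(j < 2 * n + 3) (((n + 2)%:R - j%:R) * c j).
Definition polyV : {poly K} := \poly_(j < 2 * n + 3) ((j%:R - n%:R) * c j).

Definition coincident (z w : K) : Prop :=
  z ^+ n * polyU.[w] = w ^+ n * polyU.[z] /\
  z ^+ (n + 2) * polyV.[w] = w ^+ (n + 2) * polyV.[z].

Lemma euler_polyV : euler_op (n + 2) polyV = - euler_op n polyU.
Proof.
apply/polyP => j; rewrite coefN !coef_euler_op !coef_poly.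
by case: ifP => _; [ring | rewrite !mulr0 oppr0].
Qed.

Hypothesis n_gt0 : (0 < n)%N.
Hypothesis c0 : c 0 != 0.
Hypothesis c_top : c (2 * n + 2) != 0.

Lemma coef_polyU_top : polyU`_(2 * n + 2) != 0.
Proof.
rewrite coef_poly ifT; last lia.
by rewrite mulf_neq0 // subr_eq0 eqr_nat; apply/eqP; lia.
Qed.

Lemma coef_polyV_top : polyV`_(2 * n + 2) != 0.
Proof.
rewrite coef_poly ifT; last lia.
by rewrite mulf_neq0 // subr_eq0 eqr_nat; apply/eqP; lia.
Qed.

Lemma euler_polyU_neq0 : euler_op n polyU != 0.
Proof.
apply: contraNneq coef_polyU_top => /(congr1 (fun p : {poly K} => p`_(2 * n + 2))).
rewrite coef_euler_op coef0 => /eqP; rewrite mulf_eq0 subr_eq0 eqr_nat => /orP[|/eqP //].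
by move/eqP; lia.
Qed.

Lemma coinc_polyU_const_neq0 (r : K) : (coinc_poly n polyU).[r%:P] != 0.
Proof.
rewrite /coinc_poly !hornerE -[polyU^:P.[_]]/(polyU \Po _) comp_polyCr.
have [->|r0] := eqVneq r 0.
  rewrite expr0n gtn_eqF // mul0r subr0 mulf_eq0 negb_or monic_neq0 ?monicXn //=.
  by rewrite polyC_eq0 horner_coef0 coef_poly ifT ?mulf_neq0 // ?subr_eq0 ?eqr_nat; lia.
apply: contraNneq coef_polyU_top => /(congr1 (fun p : {poly K} => p`_(2 * n + 2))).
rewrite coef0 coefB coefXnM ifF; last lia.
rewrite -rmorphXn coefCM (_ : (2 * n + 2 - n = n + 2)%N); last lia.
rewrite coefC ifF; last lia.
by rewrite sub0r => /eqP; rewrite oppr_eq0 mulf_eq0 (negbTE (expf_neq0 _ r0)).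
Qed.

Lemma size_coinc_polyU : (3 < size (coinc_poly n polyU))%N.
Proof.
by apply: leq_ltn_trans (size_coinc_poly_gt _ coef_polyU_top); lia.
Qed.

Lemma size_coinc_polyV : (3 < size (coinc_poly (n + 2) polyV))%N.
Proof.
by apply: leq_ltn_trans (size_coinc_poly_gt _ coef_polyV_top); lia.
Qed.

End CurvePolynomials.

Lemma signr_sub_neq0 (R : numDomainType) j m : odd (j + m) -> (-1) ^+ j - (-1) ^+ m != 0 :> R.
Proof.
rewrite oddD -(signr_odd _ j) -(signr_odd _ m).
case: (odd j); case: (odd m) => //= _; rewrite ?expr0 ?expr1 ?opprK.
  by rewrite -opprD oppr_eq0 -mulr2n pnatr_eq0.
by rewrite -mulr2n pnatr_eq0.
Qed.

Lemma signr_eq_even (R : nzRingType) j m : ~~ odd (j + m) -> (-1) ^+ j = (-1) ^+ m :> R.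
Proof. by rewrite oddD -(signr_odd _ j) -(signr_odd _ m); case: (odd j); case: (odd m). Qed.

Section ExceptionalSet.
Variable K : numClosedFieldType.
Variables (n : nat) (c : nat -> K).
Hypothesis n_gt0 : (0 < n)%N.
Hypothesis c0 : c 0 != 0.
Hypothesis c_top : c (2 * n + 2) != 0.
Local Notation U := (polyU n c).
Local Notation V := (polyV n c).

Lemma exceptional_of_cofactors (Q G1 G2 : {poly {poly K}}) :
  coinc_poly n U = Q * G1 -> coinc_poly (n + 2) V = Q * G2 ->
  G1.['X] != 0 -> G1.[- 'X] != 0 -> (size Q <= 3)%N ->
  exists2 B : {poly K}, B != 0 & forall z w, coincident n c z w ->
    (map_poly (horner_eval z) Q).[w] != 0 -> root B z.
Proof.
move=> UQG1 VQG2 G1X G1NX sQ.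
have size_cofactor k W G : (3 < size (coinc_poly k W))%N -> coinc_poly k W = Q * G ->
    (1 < size G)%N.
  move=> sF FQG; rewrite ltnNge; apply: contraTN sF => sG.
  rewrite -leqNgt FQG (leq_trans (size_polyMleq Q G)) //; lia.
have [[u v] /= _ uv] := resultant_in_ideal
  (size_cofactor _ _ _ (size_coinc_polyU n_gt0 c0 c_top) UQG1)
  (size_cofactor _ _ _ (size_coinc_polyV n_gt0 c0 c_top) VQG2).
exists (resultant G1 G2).
  exact: coinc_cofactor_resultant_neq0 (euler_polyV n c)
    (euler_polyU_neq0 n_gt0 c0 c_top) (coinc_polyU_const_neq0 n_gt0 c0 c_top) UQG1 VQG2 G1X G1NX.
move=> z w [e1 e2] Qzw; set phi := map_poly (horner_eval z).
have cofactor_root k W G : coinc_poly k W = Q * G ->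
    z ^+ k * W.[w] = w ^+ k * W.[z] -> (phi G).[w] = 0.
  move=> FQG ezw; apply/eqP; move: Qzw.
  have := congr1 (fun P => (phi P).[w]) FQG.
  rewrite /= coinc_poly_horner_eval ezw subrr /phi rmorphM /= hornerM => /esym/eqP.
  by rewrite mulf_eq0 => /orP[/eqP -> /eqP|].
have := congr1 (fun P => (phi P).[w]) uv.
rewrite /phi /= map_polyC /= hornerC horner_evalE /root => ->.
rewrite rmorphD !rmorphM /= hornerD !hornerM.
by rewrite (cofactor_root _ _ _ UQG1 e1) (cofactor_root _ _ _ VQG2 e2) !mulr0 addr0.
Qed.

Lemma euler_polyU_comp_neq0 (e : {poly K}) : size e = 2 ->
  'X^n * (euler_op n U \Po e) != 0.
Proof.
move=> se; rewrite mulf_neq0 ?(monic_neq0 (monicXn _ _)) //.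
by rewrite -size_poly_eq0 size_comp_poly2 // size_poly_eq0 euler_polyU_neq0.
Qed.

Lemma coinc_poly_factor_antidiag k (W : {poly K}) : W \Po - 'X = (-1) ^+ k *: W ->
  exists G, coinc_poly k W = (('X - 'Y) * ('X + 'Y)) * G.
Proof.
move=> WN; have [G FG] := coinc_poly_factor_diag k W.
have /factor_theorem [G' GG'] : root G (- 'X).
  move/eqP: (coinc_poly_antidiag WN); rewrite FG hornerM mulf_eq0 => /orP[|//].
  rewrite !hornerE -opprD oppr_eq0 -mulr2n -mulr_natr mulf_eq0 polyX_eq0.
  by rewrite -polyC_natr polyC_eq0 pnatr_eq0.
by exists G'; rewrite FG GG' polyCN opprK [G' * _]mulrC mulrA.
Qed.

Lemma coinc_polyU_antidiag_neq0 :
  (exists j, [/\ (j <= 2 * n + 2)%N, odd (j + n) & c j != 0]) -> (coinc_poly n U).[- 'X] != 0.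
Proof.
case=> j [hj odd_jn cj0]; rewrite /coinc_poly !hornerE -[U^:P.[_]]/(U \Po _).
apply/eqP => /(congr1 (fun p : {poly K} => p`_(n + j))).
rewrite coefB coefXnM ifF; last lia.
rewrite exprNX -scalerAl coefZ coefXnM ifF; last lia.
rewrite addKn coef_comp_polyNX coef0 -mulrBl => /eqP.
rewrite mulf_eq0 (negbTE (signr_sub_neq0 _ odd_jn)) /=.
rewrite coef_poly ifT; last lia.
rewrite mulf_eq0 (negbTE cj0) orbF subr_eq0 eqr_nat => /eqP e.
by move: odd_jn; rewrite -e (_ : (n + 2 + n = (n + 1).*2)%N) ?odd_double //; lia.
Qed.

Lemma exceptional_diag :
  (exists j, [/\ (j <= 2 * n + 2)%N, odd (j + n) & c j != 0]) ->
  exists2 B : {poly K}, B != 0 & forall z w, coincident n c z w -> w != z -> root B z.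
Proof.
move=> odd_coef.
have [G1 UG1] := coinc_poly_factor_diag n U; have [G2 VG2] := coinc_poly_factor_diag (n + 2) V.
have G1X : G1.['X] != 0.
  apply: coinc_cofactor_nonroot UG1 _ (euler_polyU_comp_neq0 (size_polyX _)).
  by rewrite /root !hornerE subrr.
have G1NX : G1.[- 'X] != 0.
  apply: contraNneq (coinc_polyU_antidiag_neq0 odd_coef) => G1NX.
  by rewrite UG1 hornerM G1NX mulr0.
have [|B B0 rootB] := exceptional_of_cofactors UG1 VG2 G1X G1NX; first by rewrite size_XsubC.
exists B => // z w zw wz; apply: rootB zw _.
by rewrite rmorphB /= map_polyX map_polyC /= horner_evalE !hornerE subr_eq0.
Qed.

Section EvenCoefficientsVanish.
Hypothesis c_odd : forall j, odd (j + n) -> c j = 0.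

Lemma polyU_comp_NX : U \Po - 'X = (-1) ^+ n *: U.
Proof.
apply/polyP => j; rewrite coef_comp_polyNX coefZ coef_poly.
case: ifP => _; last by rewrite !mulr0.
have [odd_jn|even_jn] := boolP (odd (j + n)); first by rewrite c_odd // !mulr0.
by rewrite (signr_eq_even _ even_jn).
Qed.

Lemma polyV_comp_NX : V \Po - 'X = (-1) ^+ (n + 2) *: V.
Proof.
apply/polyP => j; rewrite coef_comp_polyNX coefZ coef_poly.
case: ifP => _; last by rewrite !mulr0.
have [odd_jn|even_jn] := boolP (odd (j + n)); first by rewrite c_odd // !mulr0.
by rewrite (signr_eq_even _ even_jn) exprD sqrrN expr1n mulr1.
Qed.

Lemma exceptional_diag_antidiag :
  exists2 B : {poly K}, B != 0 &
    forall z w, coincident n c z w -> w != z -> w != - z -> root B z.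
Proof.
have [G1 UG1] := coinc_poly_factor_antidiag polyU_comp_NX.
have [G2 VG2] := coinc_poly_factor_antidiag polyV_comp_NX.
have G1X : G1.['X] != 0.
  apply: coinc_cofactor_nonroot UG1 _ (euler_polyU_comp_neq0 (size_polyX _)).
  by rewrite rootM /root !hornerE subrr eqxx.
have G1NX : G1.[- 'X] != 0.
  apply: coinc_cofactor_nonroot UG1 _ (euler_polyU_comp_neq0 _); last first.
    by rewrite size_polyN size_polyX.
  by rewrite rootM /root !hornerE addNr eqxx orbT.
have [|B B0 rootB] := exceptional_of_cofactors UG1 VG2 G1X G1NX.
  by rewrite (leq_trans (size_polyMleq _ _)) // size_XsubC size_XaddC.
exists B => // z w zw wz wNz; apply: rootB zw _.
rewrite rmorphM rmorphB rmorphD /= map_polyX map_polyC /= horner_evalE !hornerE.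
by rewrite mulf_neq0 // ?subr_eq0 ?addr_eq0.
Qed.

End EvenCoefficientsVanish.

End ExceptionalSet.

Local Ltac cplx_simpl := do ?
  [ rewrite -[Complex _ _ - Complex _ _]/(Complex _ _)
  | rewrite -[Complex _ _ + Complex _ _]/(Complex _ _)
  | rewrite -[- Complex _ _]/(Complex _ _)
  | rewrite -[Complex _ _ * Complex _ _]/(Complex _ _)].

Lemma natr_Complex (k : nat) : (k%:R : R[i]) = Complex k%:R 0.
Proof. by rewrite -(rmorph_nat (real_complex R)). Qed.

Definition expi (th : R) : R[i] := Complex (cos th) (sin th).

Lemma expiX (th : R) (j : nat) : expi th ^+ j = expi (INR j * th).
Proof.
elim: j => [|j IH]; first by rewrite expr0 /expi /= Rmult_0_l cos_0 sin_0.
rewrite exprS IH /expi; cplx_simpl.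
rewrite S_INR Rmult_plus_distr_r Rmult_1_l Rplus_comm cos_plus sin_plus.
by congr Complex; rewrite addrC.
Qed.

Lemma expi_mul_conj (th : R) : expi th * (expi th)^* = 1.
Proof.
rewrite /expi /=; cplx_simpl; congr Complex; last by ring.
by have := sin2_cos2 th; rewrite /Rsqr mulrN opprK addrC.
Qed.

Lemma expiX_sub (th : R) (N m : nat) : (m <= N)%N ->
  expi th ^+ (N - m) = expi th ^+ N * (expi (INR m * th))^*.
Proof. by move=> mN; rewrite -{2}(subnK mN) exprD (expiX th m) -mulrA expi_mul_conj mulr1. Qed.

(* [fourier_coef N a b j] is the coefficient [c_(j-N)] in
   [p(th) = sum_(|m| <= N) c_m e^(i m th)], so [c_(-m) = (a_m + i b_m)/2]. *)
Definition fourier_coef (N : nat) (a b : nat -> R) (j : nat) : R[i] :=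
  if (j < N)%N then Complex (a (N - j)%N / 2) (b (N - j)%N / 2)
  else if j == N then Complex (a 0%N) 0
  else if (j <= 2 * N)%N then Complex (a (j - N)%N / 2) (- (b (j - N)%N / 2))
  else 0.

Lemma fourier_coef_add N a b m : (0 < m <= N)%N ->
  fourier_coef N a b (N + m) = Complex (a m / 2) (- (b m / 2)).
Proof.
case/andP=> m0 mN; rewrite /fourier_coef ifF; last lia.
by rewrite ifF ?ifT ?addKn //; [lia | apply/negbTE/eqP; lia].
Qed.

Lemma fourier_coef_sub N a b m : (0 < m <= N)%N ->
  fourier_coef N a b (N - m) = Complex (a m / 2) (b m / 2).
Proof. by case/andP=> m0 mN; rewrite /fourier_coef ifT ?subKn //; lia. Qed.

Lemma fourier_coef_mid N a b : fourier_coef N a b N = Complex (a 0%N) 0.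
Proof. by rewrite /fourier_coef ltnn eqxx. Qed.

Lemma sum_ord_center (V : nmodType) (N : nat) (g : nat -> V) :
  \sum_(j < 2 * N + 1) g j = g N + \sum_(k < N) (g (N + k.+1)%N + g (N - k.+1)%N).
Proof.
elim: N g => [|N IH] g; first by rewrite big_ord1 big_ord0 addr0.
rewrite (_ : (2 * N.+1 + 1 = (2 * N + 1).+2)%N); last lia.
rewrite big_ord_recl big_ord_recr /= (IH (fun j => g (bump 0 j))) big_ord_recr /=.
rewrite /bump !add1n; under eq_bigr => i _ do rewrite !add1n.
rewrite (_ : (N.+1 + N.+1 = (2 * N + 1).+1)%N); last lia.
rewrite subnn.
have -> : \sum_(i < N) (g (N + i.+1).+1 + g (N - i.+1).+1) =
          \sum_(i < N) (g (N.+1 + i.+1)%N + g (N.+1 - i.+1)%N).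
  by apply: eq_bigr => i _; congr (g _ + g _); have := ltn_ord i; lia.
by rewrite [LHS]addrC -!addrA.
Qed.

Lemma sum_f_1E (N : nat) (f : nat -> R) : (0 < N)%N -> sum_f 1 N f = \sum_(k < N) f k.+1.
Proof.
rewrite /sum_f sum_f_R0E; case: N => // n _.
rewrite (_ : (n.+1 - 1)%coq_nat = n); last by rewrite Nat.sub_succ Nat.sub_0_r.
by rewrite big_mkord; apply: eq_bigr => k _; rewrite Nat.add_1_r.
Qed.

Lemma sum_Complex (N : nat) (F G : 'I_N -> R) :
  \sum_(k < N) Complex (F k) (G k) = Complex (\sum_(k < N) F k) (\sum_(k < N) G k).
Proof.
by apply: (big_ind3 (fun (x : R[i]) y z => x = Complex y z)) => // x1 x2 x3 y1 y2 y3 -> ->.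
Qed.

Lemma Complex_trig_poly (eps : R) N a b th : (0 < N)%N ->
  Complex (trig_poly N a b th) (eps * trig_poly_deriv N a b th) =
  Complex (a 0%N) 0 + \sum_(k < N) Complex
    (a k.+1 * cos (INR k.+1 * th) + b k.+1 * sin (INR k.+1 * th))
    (eps * (INR k.+1 * (b k.+1 * cos (INR k.+1 * th) - a k.+1 * sin (INR k.+1 * th)))).
Proof.
move=> N0; rewrite sum_Complex /trig_poly /trig_poly_deriv !sum_f_1E // mulr_sumr.
by cplx_simpl; rewrite add0r.
Qed.

Lemma harmonic_pair (A B C S M : R) :
  (1 - Complex M 0) * Complex (A / 2) (- (B / 2)) * Complex C S
  + (1 + Complex M 0) * Complex (A / 2) (B / 2) * Complex C (- S)
  = Complex (A * C + B * S) (M * (B * C - A * S)).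
Proof. by rewrite -[1 : R[i]]/(Complex 1 0); cplx_simpl; congr Complex; field. Qed.

Lemma expiX_mul_trig_poly (eps : R) N a b th : (0 < N)%N ->
  expi th ^+ N * Complex (trig_poly N a b th) (eps * trig_poly_deriv N a b th) =
  \sum_(j < 2 * N + 1)
    (1 + Complex eps 0 * (N%:R - j%:R)) * fourier_coef N a b j * expi th ^+ j.
Proof.
move=> N0; rewrite Complex_trig_poly // mulrDr mulr_sumr (sum_ord_center _ (fun j : nat =>
  (1 + Complex eps 0 * (N%:R - j%:R)) * fourier_coef N a b j * expi th ^+ j)) [RHS]/=.
rewrite fourier_coef_mid.
rewrite subrr mulr0 addr0 mul1r mulrC; congr (_ + _); apply: eq_bigr => k _.
have kN : (0 < k.+1 <= N)%N by rewrite ltn_ord.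
rewrite fourier_coef_add // fourier_coef_sub // exprD expiX_sub // !expiX.
have -> : (N%:R - (N + k.+1)%:R : R[i]) = - Complex (INR k.+1) 0.
  by rewrite INRE -natr_Complex natrD; ring.
have -> : (N%:R - (N - k.+1)%:R : R[i]) = Complex (INR k.+1) 0.
  by rewrite INRE -natr_Complex natrB ?(ltnW (ltn_ord k)) //; ring.
rewrite mulrN.
have -> : Complex eps 0 * Complex (INR k.+1) 0 = Complex (eps * INR k.+1) 0.
  by cplx_simpl; congr Complex; ring.
rewrite [eps * _]mulrA -harmonic_pair.
rewrite -[(expi (INR k.+1 * th))^*]/(Complex _ _) -[expi (INR k.+1 * th)]/(Complex _ _).
ring.
Qed.

Lemma gamma_curve_Complex N a b th :
  Complex (gamma_curve N a b th).1 (gamma_curve N a b th).2 =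
  Complex (trig_poly N a b th) (trig_poly_deriv N a b th) * expi th.
Proof. by rewrite /gamma_curve Derive_trig_poly. Qed.

Lemma gamma_curve_conj N a b th :
  Complex (gamma_curve N a b th).1 (- (gamma_curve N a b th).2) =
  Complex (trig_poly N a b th) (- trig_poly_deriv N a b th) * (expi th)^*.
Proof.
rewrite /gamma_curve Derive_trig_poly /expi /=; cplx_simpl.
by rewrite ?(RplusE, RminusE, RmultE, RoppE); congr Complex; ring.
Qed.

Section CurveAsPolynomial.
Variables (n : nat) (a b : nat -> R).
Local Notation c := (fourier_coef n.+1 a b).
Local Notation gamma := (gamma_curve n.+1 a b).

Lemma polyU_expi th :
  expi th ^+ n * Complex (gamma th).1 (gamma th).2 = (polyU n c).[expi th].
Proof.
rewrite gamma_curve_Complex [_ * expi th]mulrC mulrA -exprSr.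
rewrite -[trig_poly_deriv _ _ _ _]mul1r.
rewrite expiX_mul_trig_poly // horner_poly (_ : (2 * n.+1 + 1 = 2 * n + 3)%N); last lia.
apply: eq_bigr => j _; rewrite -[Complex 1 0]/(1 : R[i]) mul1r (natrD _ n 2); congr (_ * _ * _).
by rewrite -addn1 natrD; ring.
Qed.

Lemma polyV_expi th :
  expi th ^+ (n + 2) * Complex (gamma th).1 (- (gamma th).2) = (polyV n c).[expi th].
Proof.
rewrite gamma_curve_conj addn2 exprS [expi th * _]mulrC -mulrA.
rewrite [X in _ * X]mulrCA expi_mul_conj mulr1.
rewrite -[- trig_poly_deriv _ _ _ _]mulN1r.
rewrite expiX_mul_trig_poly // horner_poly (_ : (2 * n.+1 + 1 = 2 * n + 3)%N); last lia.
have -> : Complex (-1) 0 = -1 :> R[i] by rewrite -[-1 : R[i]]/(Complex (-1) (-0)) oppr0.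
apply: eq_bigr => j _; congr (_ * _ * _).
by rewrite -addn1 natrD; ring.
Qed.

End CurveAsPolynomial.

Definition circ (t : R) : R[i] := expi (2 * atan t).

Definition tan_half (z : R[i]) : R := Rdiv (complex.Im z) (Rplus 1 (complex.Re z)).

Lemma tan_half_circ t : tan_half (circ t) = t.
Proof. exact: tan_half_2atan. Qed.

Lemma circ_inj s t : circ s = circ t -> s = t.
Proof. by move=> e; rewrite -(tan_half_circ s) e tan_half_circ. Qed.

Lemma circ_antipode s t : s * t = -1 -> circ s = - circ t.
Proof. by move=> st; rewrite /circ /expi (cos_2atan_antipode st) (sin_2atan_antipode st). Qed.

Lemma circ_eq_opp s t : circ s = - circ t -> s * t = -1.
Proof.
move=> st; have t0 : t != 0.
  apply/eqP => t0; move: st; rewrite t0 /circ /expi atan_0 Rmult_0_r cos_0 sin_0.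
  by rewrite -[- Complex _ _]/(Complex _ _) => -[/cos_2atan_neq_m1].
have inv_t : - t^-1 * t = -1 by rewrite mulNr mulVf.
by rewrite (circ_inj (etrans st (esym (circ_antipode inv_t)))).
Qed.

Lemma circ_neq0 t : circ t != 0.
Proof.
apply/eqP => c0; have := expi_mul_conj (2 * atan t).
by rewrite -/(circ t) c0 mul0r => /eqP; rewrite eq_sym oner_eq0.
Qed.

Lemma In_mem (x : R) (l : seq R) : x \in l -> In x l.
Proof. by elim: l => [|y l IH] //; rewrite inE => /orP [/eqP ->|/IH]; [left | right]. Qed.

Lemma roots_circ_finite (B : {poly R[i]}) : B != 0 ->
  exists E : list R, forall t, root B (circ t) -> In t E.
Proof.
move=> B0; have [rs Brs] := closed_field_poly_normal B.
exists (map tan_half rs) => t; rewrite Brs rootZ ?lead_coef_eq0 // root_prod_XsubC => trs.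
by apply: In_mem; rewrite -(tan_half_circ t) map_f.
Qed.

Lemma pair_eq_Complex (p q : R * R) : Complex p.1 p.2 = Complex q.1 q.2 -> p = q.
Proof. by case: p q => [x y] [x' y'] /= [-> ->]. Qed.

Section Fibers.
Variables (n : nat) (a b : nat -> R).
Local Notation c := (fourier_coef n.+1 a b).
Local Notation P := (Pcurve n.+1 a b).

Lemma Pcurve_coincident s t : P s = P t -> coincident n c (circ t) (circ s).
Proof.
move=> Pst; rewrite /coincident /circ -!polyU_expi -!polyV_expi.
by rewrite -![gamma_curve _ _ _ (2 * atan _)]/(Pcurve _ _ _ _) Pst; split; ring.
Qed.

Lemma Pcurve_antipode : (forall j, odd (j + n) -> c j = 0) ->
  forall s t, s * t = -1 -> P s = P t.
Proof.
move=> c_odd s t st; apply: pair_eq_Complex.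
have UN x : (polyU n c).[- x] = (-1) ^+ n * (polyU n c).[x].
  by rewrite -hornerZ -polyU_comp_NX // horner_comp !hornerE.
have := polyU_expi n a b (2 * atan s); rewrite -/(circ s) (circ_antipode st) UN.
rewrite -polyU_expi -/(circ t) -/(Pcurve _ _ _ t) -/(Pcurve _ _ _ s) (exprNn (circ t)) -!mulrA.
have s0 : (-1) ^+ n != 0 :> R[i] by rewrite signr_eq0.
by move/(mulfI s0)/(mulfI (expf_neq0 _ (circ_neq0 t))).
Qed.

End Fibers.

Lemma traces_times_1 N a b (B : {poly R[i]}) : B != 0 ->
  (forall s t, Pcurve N a b s = Pcurve N a b t -> s <> t -> root B (circ t)) ->
  traces_times N a b 1.
Proof.
move=> B0 PB; have [E BE] := roots_circ_finite B0.
split; first lia.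
exists E => t tE; exists [:: t]; split; first by constructor; [|constructor].
split=> // s; split=> [Pst|[<-|[]] //]; left.
by case: (Req_dec t s) => // ts; case: tE; apply/BE/(PB s t Pst); move/esym.
Qed.

Lemma traces_times_2 N a b (B : {poly R[i]}) : B != 0 ->
  (forall s t, s * t = -1 -> Pcurve N a b s = Pcurve N a b t) ->
  (forall s t, Pcurve N a b s = Pcurve N a b t -> s <> t -> s * t <> -1 -> root B (circ t)) ->
  traces_times N a b 2.
Proof.
move=> B0 Panti PB; have [E BE] := roots_circ_finite B0.
split; first lia.
exists (0 :: E) => t tE; have t0 : t != 0 by apply/eqP => t0; apply: tE; left.
have inv_t : - t^-1 * t = -1 by rewrite mulNr mulVf.
exists [:: t; - t^-1]; split.
  by constructor; [case=> // /(antipode_neq inv_t) | constructor; [|constructor]].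
split=> // s; split=> [Pst|[<-|[<-|[]]] //]; last exact: Panti.
case: (Req_dec t s) => [|ts]; first by left.
case: (Req_dec (s * t) (-1)) => [st|st].
  by right; left; apply: (mulIf t0); rewrite inv_t.
by case: tE; right; apply/BE; apply: PB Pst _ st => e; apply: ts.
Qed.

Lemma Complex_neq0 (x y : R) : x <> 0 \/ y <> 0 -> Complex x y != 0.
Proof. by move=> xy; apply/eqP => -[x0 y0]; case: xy. Qed.

Lemma half_neq0 (x : R) : x <> 0 -> x / 2 <> 0.
Proof. by move=> /eqP x0 /eqP; rewrite mulf_eq0 invr_eq0 pnatr_eq0 orbF (negbTE x0). Qed.

Section FourierCoefficients.
Variables (n : nat) (a b : nat -> R).
Local Notation c := (fourier_coef n.+1 a b).

Lemma fourier_coef_ends_neq0 : a n.+1 <> 0 \/ b n.+1 <> 0 -> c 0 != 0 /\ c (2 * n + 2) != 0.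
Proof.
move=> ab; split.
  by rewrite /fourier_coef /= subn0; apply: Complex_neq0; case: ab => /half_neq0; auto.
rewrite (_ : (2 * n + 2 = n.+1 + n.+1)%N); last lia.
rewrite fourier_coef_add ?leqnn //; apply: Complex_neq0.
by case: ab => /half_neq0 ?; [left | right; apply/eqP; rewrite oppr_eq0; apply/eqP].
Qed.

Lemma fourier_coef_odd_neq0 :
  (exists k, (2 * k <= n.+1)%coq_nat /\ a (2 * k)%coq_nat <> 0) \/
  (exists k, (1 <= k)%coq_nat /\ (2 * k <= n.+1)%coq_nat /\ b (2 * k)%coq_nat <> 0) ->
  exists j, [/\ (j <= 2 * n + 2)%N, odd (j + n) & c j != 0].
Proof.
case=> [[[|k] [kn ak]] | [k [k1 [kn bk]]]].
- exists n.+1; split; [lia | by rewrite addSn addnn /= odd_double |].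
  by rewrite fourier_coef_mid; apply: Complex_neq0; left.
- exists (n.+1 + 2 * k.+1)%N; split; first lia.
    by rewrite (_ : (n.+1 + 2 * k.+1 + n = (n + k.+1).*2.+1)%N) ?odd_double //; lia.
  by rewrite fourier_coef_add; [apply: Complex_neq0; left; apply: half_neq0 | lia].
- exists (n.+1 + 2 * k)%N; split; first lia.
    by rewrite (_ : (n.+1 + 2 * k + n = (n + k).*2.+1)%N) ?odd_double //; lia.
  rewrite fourier_coef_add; last lia.
  by apply: Complex_neq0; right; apply/eqP; rewrite oppr_eq0; apply/eqP/half_neq0.
Qed.

Lemma fourier_coef_odd_eq0 :
  (forall k, (2 * k <= n.+1)%coq_nat -> a (2 * k)%coq_nat = 0) ->
  (forall k, (1 <= k)%coq_nat -> (2 * k <= n.+1)%coq_nat -> b (2 * k)%coq_nat = 0) ->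
  forall j, odd (j + n) -> c j = 0.
Proof.
move=> a_even b_even j odd_jn.
have coef0 m : ~~ odd m -> (0 < m <= n.+1)%N -> a m = 0 /\ b m = 0.
  move=> even_m /andP[m0 mn]; have m2 : m = (2 * m./2)%N.
    by rewrite mul2n -[LHS]odd_double_half (negbTE even_m).
  by rewrite m2; split; [apply: a_even | apply: b_even]; lia.
rewrite /fourier_coef; case: ltnP => [jn|nj].
  have [||-> ->] := coef0 (n.+1 - j)%N; last by rewrite !mul0r.
    by move: odd_jn; rewrite oddD oddB ?oddS 1?ltnW //; case: (odd j); case: (odd n).
  by apply/andP; split; [rewrite subn_gt0 | rewrite leq_subr].
case: eqP => [_ | jN]; first by rewrite (a_even 0) //; lia.
case: leqP => // j2n; have [||-> ->] := coef0 (j - n.+1)%N; last by rewrite !mul0r oppr0.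
  by move: odd_jn; rewrite oddD oddB ?oddS //; case: (odd j); case: (odd n).
by apply/andP; split; lia.
Qed.
End FourierCoefficients.

Local Close Scope ring_scope.
Local Open Scope R_scope.

Theorem lemma2p3 (N : nat) (a b : nat -> R)
  (hN : (2 <= N)%coq_nat) (hdeg : a N <> 0 \/ b N <> 0) :
  (((exists k : nat, (2 * k <= N)%coq_nat /\ a (2 * k)%coq_nat <> 0) \/
    (exists k : nat, (1 <= k)%coq_nat /\ (2 * k <= N)%coq_nat /\ b (2 * k)%coq_nat <> 0)) ->
   traces_times N a b 1%nat)
  /\
  ((forall k : nat, (2 * k <= N)%coq_nat -> a (2 * k)%coq_nat = 0) ->
   (forall k : nat, (1 <= k)%coq_nat -> (2 * k <= N)%coq_nat -> b (2 * k)%coq_nat = 0) ->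
   traces_times N a b 2%nat).
Proof.
case: N hN hdeg => [|n] hN hdeg; first lia.
have n_gt0 : (0 < n)%N by lia.
have [c0 c_top] := fourier_coef_ends_neq0 hdeg.
split=> [even_coef | a_even b_even].
- have [B B0 rootB] := exceptional_diag n_gt0 c0 c_top (fourier_coef_odd_neq0 even_coef).
  apply: (traces_times_1 B0) => s t Pst st; apply: rootB (Pcurve_coincident Pst) _.
  by apply/eqP => /circ_inj.
- have c_odd := fourier_coef_odd_eq0 a_even b_even.
  have [B B0 rootB] := exceptional_diag_antidiag n_gt0 c0 c_top c_odd.
  apply: (traces_times_2 B0 (Pcurve_antipode c_odd)) => s t Pst st st1.
  by apply: rootB (Pcurve_coincident Pst) _ _; apply/eqP; [move/circ_inj | move/circ_eq_opp].
Qed.
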